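(* Let $\mathscr H$ be a Hilbert module over $A=M_d(\mathbb C)$. If $S\in\mathscr F(\mathscr H)$ is self-adjoint (with respect to the Hilbert space inner product $\operatorname{tr}[\cdot,\cdot]$), then there exist $\lambda_1,\dots,\lambda_n\in\mathbb R$ and a modular orthonormal family $\{f_1,\dots,f_n\}\subset\mathscr H$ such that $S=\sum_{k=1}^n\lambda_k\, f_k\odot f_k$.
   Context: A Hilbert module over $A=M_d(\mathbb C)$ is a left $A$-module $\mathscr H$ with a map $[\cdot,\cdot]:\mathscr H\times\mathscr H\to A$ such that for all $f,g,h\in\mathscr H$, $a\in A$: $[f+g,h]=[f,h]+[g,h]$; $[af,g]=a[f,g]$; $[g,f]=[f,g]^*$; $[f,f]\ge0$, and $[f,f]=0$ iff $f=0$; and $\mathscr H$ is complete in the norm $f\mapsto\|[f,f]\|^{1/2}$ (equivalently, $\mathscr H$ is a Hilbert space with inner product $\operatorname{tr}[f,g]$). For $f,g\in\mathscr H$, $f\odot g$ is the operator $h\mapsto[h,g]f$, and $\mathscr F(\mathscr H)=\{\sum_{k=1}^n f_k\odot g_k: n\in\mathbb N,\ f_k,g_k\in\mathscr H\}$. A family $\{f_k\}\subset\mathscr H$ is modular orthonormal if $[f_j,f_k]=0$ for $j\ne k$ and each $[f_k,f_k]$ is a minimal (rank-one) projection in $A$. *)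

From HB Require Import structures.
From mathcomp Require Import all_boot all_order all_algebra.
From mathcomp Require Import complex.
From mathcomp Require Import reals.
Set Implicit Arguments. Unset Strict Implicit. Unset Printing Implicit Defensive.
Import Order.TTheory GRing.Theory Num.Theory.
Local Open Scope ring_scope.
Local Open Scope complex_scope.

Section HilbertModule.
Variables (R : realType) (d : nat) (H : zmodType).
Local Notation C := (R[i]).
Local Notation A := ('M[C]_d).

Definition adjmx (a : A) : A := (map_mx Num.conj a)^T.

Definition psd_mx (a : A) : Prop :=
  adjmx a = a /\
  forall v : 'cV[C]_d, 0 <= ((map_mx Num.conj v)^T *m a *m v) 0 0.

Definition minimal_projection (p : A) : Prop :=
  p *m p = p /\ adjmx p = p /\ \rank p = 1%N.

Variables (act : A -> H -> H) (ip : H -> H -> A).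

Definition left_module : Prop :=
  [/\ forall a f g, act a (f + g) = act a f + act a g,
      forall a b f, act (a + b) f = act a f + act b f,
      forall a b f, act (a *m b) f = act a (act b f) &
      forall f, act 1%:M f = f].

(* completeness for the norm f |-> (tr [f,f])^(1/2)
   (equivalent to the norm f |-> ||[f,f]||^(1/2)); stated with squared norms *)
Definition complete_module : Prop :=
  forall u : nat -> H,
    (forall e : R, 0 < e -> exists N : nat, forall m n : nat, (N <= m)%N -> (N <= n)%N ->
        \tr (ip (u m - u n) (u m - u n)) < e%:C) ->
    exists f : H, forall e : R, 0 < e -> exists N : nat, forall n : nat, (N <= n)%N ->
        \tr (ip (u n - f) (u n - f)) < e%:C.

Definition hilbert_module : Prop :=
  left_module /\
  (forall f g h, ip (f + g) h = ip f h + ip g h) /\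
  (forall a f g, ip (act a f) g = a *m ip f g) /\
  (forall f g, ip g f = adjmx (ip f g)) /\
  (forall f, psd_mx (ip f f)) /\
  (forall f, ip f f = 0 <-> f = 0) /\
  complete_module.

Definition odot (f g : H) : H -> H := fun h => act (ip h g) f.

Definition in_finite_rank (S : H -> H) : Prop :=
  exists (n : nat) (fs gs : 'I_n -> H),
    forall h, S h = \sum_(k < n) odot (fs k) (gs k) h.

Definition self_adjoint (S : H -> H) : Prop :=
  forall h h', \tr (ip (S h) h') = \tr (ip h (S h')).

Definition modular_orthonormal (n : nat) (f : 'I_n -> H) : Prop :=
  (forall j k : 'I_n, j != k -> ip (f j) (f k) = 0) /\
  (forall k : 'I_n, minimal_projection (ip (f k) (f k))).

End HilbertModule.

From HB Require Import structures.
From mathcomp Require Import all_boot all_order all_algebra.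
From mathcomp Require Import complex reals spectral.
From mathcomp Require Import ring.
Set Implicit Arguments. Unset Strict Implicit. Unset Printing Implicit Defensive.
Import Order.TTheory GRing.Theory Num.Theory.
Local Open Scope ring_scope.

(* Let e = E_00. On the corner K = {h | e h = h} the entry <x, y> = [x, y]_00
   is a complex inner product and [x, y] = <x, y> e. A finite-rank S commutes
   with the action of A, so it maps K into the finite-dimensional span of the
   vectors E_0j f_k, and it is self-adjoint there. Diagonalising its Hermitian
   matrix in a Gram-Schmidt basis yields eigenvectors v_k in K that are
   <.,.>-orthonormal, i.e. [v_j, v_k] = δ_jk e, a minimal projection. Finally
   S and Σ λ_k v_k ⊙ v_k are both A-linear and agree on K, hence everywhere,
   because h = Σ_i E_i0 (E_0i h) with E_0i h in K. *)

Lemma mul_delta_mxE (R : pzRingType) m n p (i : 'I_m) (j : 'I_n)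
    (M : 'M[R]_(n, p)) a b :
  (delta_mx i j *m M) a b = (a == i)%:R * M j b.
Proof.
rewrite mxE (bigD1 j) //= big1 ?addr0; first by rewrite mxE eqxx andbT.
by move=> c /negPf cj; rewrite mxE cj andbF mul0r.
Qed.

Lemma mul_delta_mx_sum (R : pzRingType) m n p (i : 'I_m) (j : 'I_n)
    (M : 'M[R]_(n, p)) :
  delta_mx i j *m M = \sum_k M j k *: delta_mx i k.
Proof.
apply/matrixP => a b; rewrite mul_delta_mxE summxE (bigD1 b) //= big1 ?addr0.
  by rewrite !mxE eqxx andbT mulr_natl mulr_natr.
by move=> k /negPf kb; rewrite !mxE [b == k]eq_sym kb andbF mulr0.
Qed.

Lemma mul_delta_mx_sandwich (R : comPzRingType) m n p q (i : 'I_m) (j : 'I_n)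
    (k : 'I_p) (l : 'I_q) (M : 'M[R]_(n, p)) :
  delta_mx i j *m M *m delta_mx k l = M j k *: delta_mx i l.
Proof.
apply/matrixP => a b; rewrite mxE (bigD1 k) //= big1 ?addr0.
  by rewrite mul_delta_mxE !mxE eqxx /= -mulnb natrM mulrAC mulrC.
by move=> c /negPf ck; rewrite !mxE ck mulr0.
Qed.

Lemma mxtrace_delta (R : pzRingType) n (i j : 'I_n) :
  \tr (delta_mx i j : 'M[R]_n) = (i == j)%:R.
Proof.
rewrite /mxtrace (bigD1 i) //= big1 ?addr0; first by rewrite mxE eqxx.
by move=> k /negPf ki; rewrite mxE ki.
Qed.

Section Adjoint.
Variables (R : realType) (d : nat).
Implicit Types a b : 'M[R[i]]_d.

Lemma adjmxE a i j : adjmx a i j = (a j i)^*.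
Proof. by rewrite !mxE. Qed.

Lemma adjmx0 : adjmx (0 : 'M[R[i]]_d) = 0.
Proof. by apply/matrixP => i j; rewrite !mxE rmorph0. Qed.

Lemma adjmxD a b : adjmx (a + b) = adjmx a + adjmx b.
Proof. by apply/matrixP => i j; rewrite !mxE rmorphD. Qed.

Lemma adjmxM a b : adjmx (a *m b) = adjmx b *m adjmx a.
Proof. by rewrite /adjmx map_mxM trmx_mul. Qed.

Lemma adjmx_delta (i j : 'I_d) : adjmx (delta_mx i j : 'M[R[i]]_d) = delta_mx j i.
Proof. by apply/matrixP => k l; rewrite !mxE rmorph_nat andbC. Qed.

End Adjoint.

Section HilbertModuleAlgebra.
Variables (R : realType) (d : nat) (H : zmodType).
Local Notation C := R[i].
Variables (act : 'M[C]_d -> H -> H) (ip : H -> H -> 'M[C]_d).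
Hypothesis hH : hilbert_module act ip.

Lemma actDr a f g : act a (f + g) = act a f + act a g.
Proof. by case: hH => [[]]. Qed.

Lemma actDl a b f : act (a + b) f = act a f + act b f.
Proof. by case: hH => [[]]. Qed.

Lemma actM a b f : act (a *m b) f = act a (act b f).
Proof. by case: hH => [[]]. Qed.

Lemma act1 f : act 1%:M f = f.
Proof. by case: hH => [[]]. Qed.

Lemma ipDl f g h : ip (f + g) h = ip f h + ip g h.
Proof. by case: hH => _ []. Qed.

Lemma ipAl a f g : ip (act a f) g = a *m ip f g.
Proof. by case: hH => _ [_ []]. Qed.

Lemma ipC f g : ip g f = adjmx (ip f g).
Proof. by case: hH => _ [_ [_ []]]. Qed.

Lemma ip_psd f : psd_mx (ip f f).
Proof. by case: hH => _ [_ [_ [_ []]]]. Qed.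

Lemma ip_eq0 f : ip f f = 0 -> f = 0.
Proof. by case: hH => _ [_ [_ [_ [_ [/(_ f) []]]]]]. Qed.

Lemma act0r a : act a 0 = 0.
Proof. by apply: (@addrI _ (act a 0)); rewrite -actDr !addr0. Qed.

Lemma act0l f : act 0 f = 0.
Proof. by apply: (@addrI _ (act 0 f)); rewrite -actDl !addr0. Qed.

Lemma actNr a f : act a (- f) = - act a f.
Proof. by apply/eqP; rewrite -addr_eq0 -actDr addNr act0r. Qed.

Lemma act_sumr a I (r : seq I) (P : pred I) (F : I -> H) :
  act a (\sum_(i <- r | P i) F i) = \sum_(i <- r | P i) act a (F i).
Proof. exact: (big_morph _ (actDr a) (act0r a)). Qed.

Lemma act_suml f I (r : seq I) (P : pred I) (F : I -> 'M[C]_d) :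
  act (\sum_(i <- r | P i) F i) f = \sum_(i <- r | P i) act (F i) f.
Proof. exact: (big_morph (fun a => act a f) (fun a b => actDl a b f) (act0l f)). Qed.

Lemma ip0l g : ip 0 g = 0.
Proof. by apply: (@addrI _ (ip 0 g)); rewrite -ipDl !addr0. Qed.

Lemma ipDr f g h : ip f (g + h) = ip f g + ip f h.
Proof. by rewrite ipC ipDl adjmxD -!ipC. Qed.

Lemma ip0r f : ip f 0 = 0.
Proof. by rewrite ipC ip0l adjmx0. Qed.

Lemma ipAr a f g : ip f (act a g) = ip f g *m adjmx a.
Proof. by rewrite ipC ipAl adjmxM -ipC. Qed.

Lemma ip_suml g I (r : seq I) (P : pred I) (F : I -> H) :
  ip (\sum_(i <- r | P i) F i) g = \sum_(i <- r | P i) ip (F i) g.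
Proof. exact: (big_morph (fun f => ip f g) (fun a b => ipDl a b g) (ip0l g)). Qed.

Lemma ip_sumr f I (r : seq I) (P : pred I) (F : I -> H) :
  ip f (\sum_(i <- r | P i) F i) = \sum_(i <- r | P i) ip f (F i).
Proof. exact: (big_morph (ip f) (ipDr f) (ip0r f)). Qed.

Definition cscale (c : C) (f : H) := act c%:M f.

Lemma cscaleDl a b f : cscale (a + b) f = cscale a f + cscale b f.
Proof. by rewrite /cscale raddfD actDl. Qed.

Lemma cscale0 f : cscale 0 f = 0.
Proof. by rewrite /cscale raddf0 act0l. Qed.

Lemma cscale1 f : cscale 1 f = f.
Proof. exact: act1. Qed.

Lemma cscaleA a b f : cscale a (cscale b f) = cscale (a * b) f.
Proof. by rewrite /cscale -actM -scalar_mxM. Qed.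

Lemma act_cscale a c f : act a (cscale c f) = cscale c (act a f).
Proof. by rewrite /cscale -!actM scalar_mxC. Qed.

Lemma cscale_sumr a I (r : seq I) (P : pred I) (F : I -> H) :
  cscale a (\sum_(i <- r | P i) F i) = \sum_(i <- r | P i) cscale a (F i).
Proof. exact: act_sumr. Qed.

Lemma cscale_suml f I (r : seq I) (P : pred I) (F : I -> C) :
  cscale (\sum_(i <- r | P i) F i) f = \sum_(i <- r | P i) cscale (F i) f.
Proof. exact: (big_morph (cscale^~ f) (fun a b => cscaleDl a b f) (cscale0 f)). Qed.

Lemma act_scale_mx c a f : act (c *: a) f = cscale c (act a f).
Proof. by rewrite -mul_scalar_mx actM. Qed.

Definition odot_sum n (fs gs : 'I_n -> H) (h : H) :=
  \sum_(k < n) odot act ip (fs k) (gs k) h.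

Lemma cscale_odot c f g h : act c%:M (odot act ip f g h) = odot act ip (cscale c f) g h.
Proof. by rewrite /odot /cscale -!actM scalar_mxC. Qed.

Definition module_map (S : H -> H) :=
  (forall a h, S (act a h) = act a (S h)) /\ (forall f g, S (f + g) = S f + S g).

Lemma odot_sum_module_map n (fs gs : 'I_n -> H) : module_map (odot_sum fs gs).
Proof.
split=> [a h|f g]; rewrite /odot_sum.
  by rewrite act_sumr; apply: eq_bigr => k _; rewrite /odot ipAl actM.
by rewrite -big_split; apply: eq_bigr => k _; rewrite /odot ipDl actDl.
Qed.

End HilbertModuleAlgebra.

Section Corner.
Variables (R : realType) (d' : nat) (H : zmodType).
Local Notation C := R[i].
Local Notation d := d'.+1.
Local Notation e00 := (delta_mx 0 0 : 'M[C]_d).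
Variables (act : 'M[C]_d -> H -> H) (ip : H -> H -> 'M[C]_d).
Hypothesis hH : hilbert_module act ip.
Local Notation cscale := (cscale act).

Definition in_corner (x : H) := act e00 x = x.

Definition cdot (f g : H) : C := ip f g 0 0.

Lemma cdotDl f g h : cdot (f + g) h = cdot f h + cdot g h.
Proof. by rewrite /cdot (ipDl hH) mxE. Qed.

Lemma cdotC f g : cdot g f = (cdot f g)^*.
Proof. by rewrite /cdot (ipC hH) adjmxE. Qed.

Lemma cdotZl c f g : cdot (cscale c f) g = c * cdot f g.
Proof. by rewrite /cdot /cscale (ipAl hH) mul_scalar_mx mxE. Qed.

Lemma cdotZr c f g : cdot f (cscale c g) = cdot f g * c^*.
Proof. by rewrite cdotC cdotZl rmorphM [cdot f g]cdotC mulrC. Qed.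

Lemma cdot0l g : cdot 0 g = 0.
Proof. by rewrite /cdot (ip0l hH) mxE. Qed.

Lemma cdotNl f g : cdot (- f) g = - cdot f g.
Proof. by apply/eqP; rewrite -addr_eq0 -cdotDl addNr cdot0l. Qed.

Lemma cdot_suml g I (r : seq I) (P : pred I) (F : I -> H) :
  cdot (\sum_(i <- r | P i) F i) g = \sum_(i <- r | P i) cdot (F i) g.
Proof. by rewrite /cdot (ip_suml hH) summxE. Qed.

Lemma cdot_sumr f I (r : seq I) (P : pred I) (F : I -> H) :
  cdot f (\sum_(i <- r | P i) F i) = \sum_(i <- r | P i) cdot f (F i).
Proof. by rewrite /cdot (ip_sumr hH) summxE. Qed.

Lemma cdot_ge0 f : 0 <= cdot f f.
Proof.
case: (ip_psd hH f) => _ /(_ (delta_mx 0 0)).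
by rewrite map_delta_mx trmx_delta mul_delta_mx_sandwich !mxE !eqxx mulr1.
Qed.

Lemma in_cornerD x y : in_corner x -> in_corner y -> in_corner (x + y).
Proof. by rewrite /in_corner (actDr hH) => -> ->. Qed.

Lemma in_cornerN x : in_corner x -> in_corner (- x).
Proof. by rewrite /in_corner (actNr hH) => ->. Qed.

Lemma in_cornerZ c x : in_corner x -> in_corner (cscale c x).
Proof. by rewrite /in_corner (act_cscale hH) => ->. Qed.

Lemma in_corner_sum I (r : seq I) (P : pred I) (F : I -> H) :
  (forall i, P i -> in_corner (F i)) -> in_corner (\sum_(i <- r | P i) F i).
Proof. by move=> KF; elim/big_ind: _ => //; [exact: (act0r hH) | exact: in_cornerD]. Qed.

Lemma in_corner_act i h : in_corner (act (delta_mx 0 i) h).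
Proof. by rewrite /in_corner -(actM hH) mul_delta_mx. Qed.

Lemma ip_corner x y : in_corner x -> in_corner y -> ip x y = cdot x y *: e00.
Proof.
move=> Kx Ky; rewrite -{1}Kx -{1}Ky (ipAl hH) (ipAr hH) adjmx_delta.
by rewrite mulmxA mul_delta_mx_sandwich.
Qed.

Lemma in_corner_cdot_eq0 x : in_corner x -> cdot x x = 0 -> x = 0.
Proof. by move=> Kx x0; apply: (ip_eq0 hH); rewrite ip_corner // x0 scale0r. Qed.

Lemma odot_corner f g x : in_corner f -> in_corner g -> in_corner x ->
  odot act ip f g x = cscale (cdot x g) f.
Proof. by move=> Kf Kg Kx; rewrite /odot ip_corner // (act_scale_mx hH) Kf. Qed.

Definition corner_orthonormal r (w : 'I_r -> H) :=
  (forall p, in_corner (w p)) /\ forall p q, cdot (w p) (w q) = (p == q)%:R.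

Lemma modular_orthonormal_corner r (v : 'I_r -> H) :
  corner_orthonormal v -> modular_orthonormal ip v.
Proof.
move=> [Kv Ov]; split=> [j k jk|k]; rewrite ip_corner // Ov.
  by rewrite (negPf jk) scale0r.
rewrite eqxx scale1r; split; first exact: mul_delta_mx.
by split; [exact: adjmx_delta | exact: mxrank_delta].
Qed.

Section Span.
Variables (r : nat) (w : 'I_r -> H).

Definition proj_span z := \sum_(p < r) cscale (cdot z (w p)) (w p).

Definition in_span z := z = proj_span z.

Lemma in_spanD y z : in_span y -> in_span z -> in_span (y + z).
Proof.
move=> Hy Hz; rewrite /in_span {1}Hy {1}Hz /proj_span -big_split.
by apply: eq_bigr => p _; rewrite cdotDl (cscaleDl hH).
Qed.

Lemma in_spanZ c z : in_span z -> in_span (cscale c z).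
Proof.
move=> Hz; rewrite /in_span {1}Hz /proj_span (cscale_sumr hH).
by apply: eq_bigr => p _; rewrite cdotZl (cscaleA hH).
Qed.

Lemma in_span_sum I (s : seq I) (P : pred I) (F : I -> H) :
  (forall i, P i -> in_span (F i)) -> in_span (\sum_(i <- s | P i) F i).
Proof.
move=> HF; elim/big_ind: _ => //; last exact: in_spanD.
by rewrite /in_span /proj_span big1 // => p _; rewrite cdot0l (cscale0 hH).
Qed.

Lemma cdot_proj_span_l y z :
  cdot (proj_span y) z = \sum_(p < r) cdot y (w p) * cdot (w p) z.
Proof. by rewrite cdot_suml; apply: eq_bigr => p _; rewrite cdotZl. Qed.

Lemma cdot_span_perp y z :
  in_span y -> (forall p, cdot (w p) z = 0) -> cdot y z = 0.
Proof. by move=> -> wz; rewrite cdot_proj_span_l big1 // => p _; rewrite wz mulr0. Qed.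

Hypothesis Ow : corner_orthonormal w.

Lemma in_corner_proj_span z : in_corner (proj_span z).
Proof. by apply: in_corner_sum => p _; apply: in_cornerZ; case: Ow. Qed.

Lemma cdot_proj_span_w y q : cdot (proj_span y) (w q) = cdot y (w q).
Proof.
rewrite cdot_proj_span_l (bigD1 q) //= big1 ?addr0 => [|p /negPf pq].
  by rewrite Ow.2 eqxx mulr1.
by rewrite Ow.2 pq mulr0.
Qed.

End Span.

Definition snoc_family r (w : 'I_r -> H) (u : H) (p : 'I_r.+1) :=
  if unlift ord_max p is Some q then w q else u.

Lemma proj_span_snoc r (w : 'I_r -> H) u y :
  proj_span (snoc_family w u) y = proj_span w y + cscale (cdot y u) u.
Proof.
rewrite /proj_span big_ord_recr /=; congr (_ + _); last by rewrite /snoc_family unlift_none.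
apply: eq_bigr => p _; have -> : widen_ord (leqnSn r) p = lift ord_max p.
  by apply: ord_inj; rewrite lift_max.
by rewrite /snoc_family liftK.
Qed.

Lemma corner_orthonormal_snoc r (w : 'I_r -> H) u :
  corner_orthonormal w -> in_corner u -> cdot u u = 1 ->
  (forall q, cdot u (w q) = 0) -> corner_orthonormal (snoc_family w u).
Proof.
move=> [Kw Ow] Ku uu uw; have wu q : cdot (w q) u = 0 by rewrite cdotC uw rmorph0.
split=> [p|p q]; rewrite /snoc_family.
  by case: (unliftP ord_max p) => [p' _|_]; [exact: Kw | exact: Ku].
case: (unliftP ord_max p) => [p' ->|->]; case: (unliftP ord_max q) => [q' ->|->].
- by rewrite (inj_eq lift_inj).
- by rewrite wu eq_sym (negPf (neq_lift _ _)).
- by rewrite uw (negPf (neq_lift _ _)).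
- by rewrite uu eqxx.
Qed.

Lemma gram_schmidt_step r (w : 'I_r -> H) b : corner_orthonormal w -> in_corner b ->
  exists r' (w' : 'I_r' -> H),
    [/\ corner_orthonormal w', in_span w' b & forall y, in_span w y -> in_span w' y].
Proof.
move=> Ow Kb; set z := b - proj_span w b.
have Kz : in_corner z by apply: in_cornerD => //; apply/in_cornerN/in_corner_proj_span.
have zw q : cdot z (w q) = 0 by rewrite cdotDl cdotNl cdot_proj_span_w // subrr.
have [z0|zn0] := eqVneq (cdot z z) 0.
  by exists r, w; split => //; apply/eqP; rewrite -subr_eq0 -/z (in_corner_cdot_eq0 Kz z0).
set s := sqrtC (cdot z z).
have s_gt0 : 0 < s by rewrite sqrtC_gt0 lt_def zn0 cdot_ge0.
have sn0 : s != 0 by rewrite gt_eqF.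
have sR : s^-1^* = s^-1 by rewrite conj_Creal // rpredV ger0_real // ltW.
have ss : cdot z z = s * s by rewrite -expr2 sqrtCK.
set u := cscale s^-1 z.
have wu q : cdot (w q) u = 0 by rewrite cdotZr cdotC zw rmorph0 mul0r.
exists r.+1, (snoc_family w u); split.
- apply: corner_orthonormal_snoc => //; first exact: in_cornerZ.
    by rewrite cdotZl cdotZr sR ss; field.
  by move=> q; rewrite cdotZl zw mulr0.
- have bu : cdot b u = s.
    have -> : b = z + proj_span w b by rewrite subrK.
    rewrite cdotDl cdot_proj_span_l big1 ?addr0 => [|p _]; last by rewrite wu mulr0.
    by rewrite cdotZr sR ss; field.
  rewrite /in_span proj_span_snoc bu /u (cscaleA hH) mulfV // (cscale1 hH).
  by rewrite /z addrC subrK.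
- move=> y Hy; rewrite /in_span proj_span_snoc (cdot_span_perp Hy wu).
  by rewrite (cscale0 hH) addr0.
Qed.

Lemma gram_schmidt (s : seq H) : (forall b, b \in s -> in_corner b) ->
  exists r (w : 'I_r -> H), corner_orthonormal w /\ forall b, b \in s -> in_span w b.
Proof.
elim: s => [|b s IH] Ks.
  by exists 0%N, (fun _ => 0); split; [split; case|].
have [|r [w [Ow Hw]]] := IH; first by move=> b' b's; apply: Ks; rewrite inE b's orbT.
have [r' [w' [Ow' Hb Hy]]] := gram_schmidt_step Ow (Ks b (mem_head _ _)).
by exists r', w'; split => // y; rewrite inE => /orP [/eqP -> | /Hw /Hy].
Qed.

Definition unitary_mix r (P : 'M[C]_r) (w : 'I_r -> H) (k : 'I_r) :=
  \sum_p cscale (P k p)^* (w p).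

Lemma cdot_unitary_mix r (P : 'M[C]_r) w x k :
  cdot x (unitary_mix P w k) = \sum_p cdot x (w p) * P k p.
Proof. by rewrite cdot_sumr; apply: eq_bigr => p _; rewrite cdotZr conjCK. Qed.

Lemma corner_orthonormal_mix r (P : 'M[C]_r) w :
  P \is unitarymx -> corner_orthonormal w -> corner_orthonormal (unitary_mix P w).
Proof.
move=> /unitarymxP /matrixP PP [Kw Ow]; split=> [k|j k].
  by apply: in_corner_sum => p _; apply: in_cornerZ.
have wv p k' : cdot (w p) (unitary_mix P w k') = P k' p.
  rewrite cdot_unitary_mix (bigD1 p) //= big1 ?addr0 => [|q /negPf qp].
    by rewrite Ow eqxx mul1r.
  by rewrite Ow eq_sym qp mul0r.
have := PP k j; rewrite !mxE eq_sym => <-; rewrite cdot_suml.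
by apply: eq_bigr => p _; rewrite cdotZl wv !mxE mulrC.
Qed.

Section CornerSpectral.
Variables (r : nat) (w : 'I_r -> H) (S : H -> H).
Hypothesis Ow : corner_orthonormal w.
Hypothesis S_span : forall x, in_corner x -> in_span w (S x).
Hypothesis S_sa : forall x y, in_corner x -> in_corner y -> cdot (S x) y = cdot x (S y).

Definition corner_mx : 'M[C]_r := \matrix_(p, q) cdot (S (w q)) (w p).

Lemma corner_mx_conj p q : corner_mx p q = (corner_mx q p)^*.
Proof. by rewrite !mxE -cdotC S_sa //; apply: Ow.1. Qed.

Lemma corner_mx_herm : corner_mx \is hermsymmx.
Proof.
rewrite is_hermitianmxE expr0 scale1r; apply/eqP/matrixP => p q.
by rewrite corner_mx_conj !mxE.
Qed.

Lemma cdot_corner_mx x p : in_corner x ->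
  cdot (S x) (w p) = \sum_q cdot x (w q) * corner_mx p q.
Proof.
move=> Kx; rewrite S_sa //; last exact: Ow.1.
rewrite {1}(S_span (Ow.1 p)) cdot_sumr; apply: eq_bigr => q _.
by rewrite cdotZr corner_mx_conj mxE.
Qed.

Lemma corner_spectral : exists r' (lam : 'I_r' -> R) (v : 'I_r' -> H),
  corner_orthonormal v /\
  forall x, in_corner x -> S x = \sum_k cscale ((lam k)%:C%C * cdot x (v k)) (v k).
Proof.
have /orthomx_spectralP Tdec := hermitian_normalmx corner_mx_herm.
have Lreal := hermitian_spectral_diag_real corner_mx_herm.
set P := spectralmx _ in Tdec; set L := spectral_diag _ in Tdec Lreal.
have Pu : P \is unitarymx := spectral_unitarymx _.
rewrite invmx_unitary // in Tdec.
have Tpq p q : corner_mx p q = \sum_k (P k p)^* * L 0 k * P k q.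
  by rewrite {1}Tdec mul_mx_diag !mxE; apply: eq_bigr => k _; rewrite !mxE.
have lamE k : (complex.Re (L 0 k))%:C%C = L 0 k.
  by apply: RRe_real; move/mxOverP: Lreal; apply.
(* corner_mx = P^t* diag(L) P: the rows of P give the eigenvectors of S. *)
exists r, (fun k => complex.Re (L 0 k)), (unitary_mix P w).
split=> [|x Kx]; first exact: corner_orthonormal_mix.
rewrite {1}(S_span Kx) /proj_span /unitary_mix.
under eq_bigr do rewrite cdot_corner_mx //.
under [RHS]eq_bigr do rewrite (cscale_sumr hH).
rewrite [RHS]exchange_big /=; apply: eq_bigr => p _.
under [RHS]eq_bigr do rewrite (cscaleA hH).
rewrite -(cscale_suml hH); congr (cscale _ _).
under [RHS]eq_bigr do rewrite lamE cdot_unitary_mix.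
under eq_bigr do rewrite Tpq mulr_sumr.
rewrite exchange_big /=; apply: eq_bigr => k _.
rewrite mulr_sumr mulr_suml; apply: eq_bigr => q _.
ring.
Qed.

End CornerSpectral.

Lemma corner_decomposition h :
  h = \sum_(i < d) act (delta_mx i 0) (act (delta_mx 0 i) h).
Proof.
under eq_bigr do rewrite -(actM hH) mul_delta_mx.
by rewrite -(act_suml hH) -mx1_sum_delta (act1 hH).
Qed.

Lemma module_map_eq_on_corner S T : module_map act S -> module_map act T ->
  (forall x, in_corner x -> S x = T x) -> forall h, S h = T h.
Proof.
move=> [SA SD] [TA TD] ST h.
have sum_morph (U : H -> H) : (forall f g, U (f + g) = U f + U g) ->
    forall F : 'I_d -> H, U (\sum_i F i) = \sum_i U (F i).
  move=> UD F; apply: (big_morph U UD).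
  by apply: (@addrI _ (U 0)); rewrite -UD !addr0.
rewrite (corner_decomposition h) !sum_morph //; apply: eq_bigr => i _.
by rewrite SA TA ST //; apply: in_corner_act.
Qed.

Lemma in_corner_module_map S x : module_map act S -> in_corner x -> in_corner (S x).
Proof. by move=> [SA _] Kx; rewrite /in_corner -SA Kx. Qed.

Lemma self_adjoint_corner S : module_map act S -> self_adjoint ip S ->
  forall x y, in_corner x -> in_corner y -> cdot (S x) y = cdot x (S y).
Proof.
move=> SM hsa x y Kx Ky; have := hsa x y.
have KSx := in_corner_module_map SM Kx; have KSy := in_corner_module_map SM Ky.
by rewrite !ip_corner // !mxtraceZ mxtrace_delta eqxx !mulr1.
Qed.

Definition corner_generators n (fs : 'I_n -> H) :=
  [seq act (delta_mx 0 j) (fs k) | k <- enum 'I_n, j <- enum 'I_d].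

Lemma corner_generators_in_corner n (fs : 'I_n -> H) b :
  b \in corner_generators fs -> in_corner b.
Proof. by case/allpairsP => -[k j] [_ _ ->]; apply: in_corner_act. Qed.

Lemma odot_sum_corner_span n (fs gs : 'I_n -> H) r (w : 'I_r -> H) :
  (forall b, b \in corner_generators fs -> in_span w b) ->
  forall x, in_corner x -> in_span w (odot_sum act ip fs gs x).
Proof.
move=> Hw x Kx; rewrite -Kx (odot_sum_module_map hH fs gs).1 /odot_sum (act_sumr hH).
apply: in_span_sum => k _; rewrite /odot -(actM hH) mul_delta_mx_sum (act_suml hH).
apply: in_span_sum => j _; rewrite (act_scale_mx hH); apply: in_spanZ; apply: Hw.
by apply: allpairs_f; rewrite mem_enum.
Qed.

Lemma finite_rank_self_adjoint_spectral n (fs gs : 'I_n -> H) :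
  self_adjoint ip (odot_sum act ip fs gs) ->
  exists r (lam : 'I_r -> R) (v : 'I_r -> H), corner_orthonormal v /\
    forall h, odot_sum act ip fs gs h =
              odot_sum act ip (fun k => cscale (lam k)%:C%C (v k)) v h.
Proof.
move=> hsa; have SM := odot_sum_module_map hH fs gs.
have [r [w [Ow Hw]]] := gram_schmidt (@corner_generators_in_corner n fs).
have [r' [lam [v [Ov Sv]]]] :=
  corner_spectral Ow (odot_sum_corner_span gs Hw) (self_adjoint_corner SM hsa).
exists r', lam, v; split=> //; apply: module_map_eq_on_corner => // [|x Kx].
  exact: odot_sum_module_map.
rewrite Sv //; apply: eq_bigr => k _.
have Kv := Ov.1 k; have Kv' := in_cornerZ (lam k)%:C%C Kv.
by rewrite odot_corner // (cscaleA hH) mulrC.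
Qed.

End Corner.

Lemma hilbert_module_dim0 (R : realType) (H : zmodType) (act : 'M[R[i]]_0 -> H -> H)
    (ip : H -> H -> 'M[R[i]]_0) :
  hilbert_module act ip -> forall f : H, f = 0.
Proof. by case=> _ [_ [_ [_ [_ [ip_def _]]]]] f; apply/ip_def/flatmx0. Qed.

Local Open Scope complex_scope.

Theorem lemma2 (R : realType) (d : nat) (H : zmodType)
    (act : 'M[R[i]]_d -> H -> H) (ip : H -> H -> 'M[R[i]]_d)
    (hH : hilbert_module act ip)
    (S : H -> H) (hS : in_finite_rank act ip S) (hsa : self_adjoint ip S) :
  exists (n : nat) (lam : 'I_n -> R) (f : 'I_n -> H),
    modular_orthonormal ip f /\
    forall h : H, S h = \sum_(k < n) act ((lam k)%:C)%:M (odot act ip (f k) (f k) h).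
Proof.
move: act ip hH S hS hsa; case: d => [|d'] act ip hH S [n [fs [gs Sdef]]] hsa.
  exists 0%N, (fun _ => 0), (fun _ => 0); split; first by split; case.
  by move=> h; rewrite big_ord0; apply: hilbert_module_dim0 hH _.
have S_eq : forall h, S h = odot_sum act ip fs gs h := Sdef.
have hsa' : self_adjoint ip (odot_sum act ip fs gs).
  by move=> h h'; rewrite -!S_eq; apply: hsa.
have [r [lam [v [Ov Sv]]]] := finite_rank_self_adjoint_spectral hH hsa'.
exists r, lam, v; split; first exact: (modular_orthonormal_corner hH Ov).
by move=> h; rewrite S_eq Sv /odot_sum; apply: eq_bigr => k _; rewrite (cscale_odot hH).
Qed.
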